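(* In the isotropic setting below, fix $r>0$, $F,F_p\in\mathrm{GL}^+(3)$. Then the set-valued right-hand sides of the Simo–Miehe flow rule and of the Lion flow rule coincide: $$-2\,F^{-1}\big[\mathcal N_r(\tau_e)\,B_e\big]F^{-T}\;=\;-F_p^{-1}\,\mathcal N_r(\Sigma_e)\,F_p^{-T}.$$ Consequently, a differentiable curve $t\mapsto C_p(t)=F_p(t)^TF_p(t)$ (at fixed $F$) satisfies the Simo–Miehe flow rule $\frac{d}{dt}[C_p^{-1}]\in-2F^{-1}[\mathcal N_r(\tau_e)B_e]F^{-T}$ if and only if it satisfies the Lion flow rule $\frac{d}{dt}[C_p^{-1}]\in-F_p^{-1}\mathcal N_r(\Sigma_e)F_p^{-T}$.
   Context: $W:\mathrm{GL}^+(3)\to\mathbb{R}$ is $C^1$, objective and isotropic ($W(QFR)=W(F)$ for all $Q,R\in\mathrm{SO}(3)$). $F_e=FF_p^{-1}$, $C_p=F_p^TF_p$, $B_e=F_eF_e^T$, $\Sigma_e=F_e^TDW(F_e)$, $\tau_e=DW(F_e)F_e^T$ (symmetric for isotropic $W$). $\langle X,Y\rangle=\mathrm{tr}(XY^T)$, $\|\cdot\|$ Frobenius norm, $\mathrm{dev}_3X=X-\frac13\mathrm{tr}(X)\mathbb{1}$. For $r>0$ and symmetric $S$, $\mathcal N_r(S)$ is the subdifferential of the indicator function of the convex set $\{S\in\mathrm{Sym}(3):\|\mathrm{dev}_3S\|\le r\}$ evaluated as in the paper: $\mathcal N_r(S)=\{0\}$ if $\|\mathrm{dev}_3S\|<r$,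 $\mathcal N_r(S)=\{\lambda\,\mathrm{dev}_3S/\|\mathrm{dev}_3S\|:\lambda\ge0\}$ if $\|\mathrm{dev}_3S\|=r$, and $\mathcal N_r(S)=\emptyset$ if $\|\mathrm{dev}_3S\|>r$. For matrices $M,N$ and a set $\mathcal A$ of matrices, $M\mathcal AN=\{MXN:X\in\mathcal A\}$. *)

From Stdlib Require Import Reals.
Open Scope R_scope.

Inductive I3 : Type := i0 | i1 | i2.

Definition Mat := I3 -> I3 -> R.

Definition sum3 (f : I3 -> R) : R := f i0 + f i1 + f i2.

Definition nxt (i : I3) : I3 := match i with i0 => i1 | i1 => i2 | i2 => i0 end.

Definition mmul (A B : Mat) : Mat := fun i j => sum3 (fun k => A i k * B k j).
Definition mtr (A : Mat) : Mat := fun i j => A j i.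
Definition madd (A B : Mat) : Mat := fun i j => A i j + B i j.
Definition msub (A B : Mat) : Mat := fun i j => A i j - B i j.
Definition mscal (c : R) (A : Mat) : Mat := fun i j => c * A i j.
Definition mzero : Mat := fun _ _ => 0.
Definition mid : Mat := fun i j => match i, j with
  | i0, i0 | i1, i1 | i2, i2 => 1 | _, _ => 0 end.

(* cofactor of a 3x3 matrix (cyclic index form gives the signs) *)
Definition cof (A : Mat) (i j : I3) : R :=
  A (nxt i) (nxt j) * A (nxt (nxt i)) (nxt (nxt j))
  - A (nxt i) (nxt (nxt j)) * A (nxt (nxt i)) (nxt j).
Definition det (A : Mat) : R := sum3 (fun j => A i0 j * cof A i0 j).
(* inverse (adjugate / determinant), meaningful when det A <> 0 *)
Definition minv (A : Mat) : Mat := fun i j => cof A j i / det A.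
Definition trace (A : Mat) : R := sum3 (fun i => A i i).

Definition inner (X Y : Mat) : R := sum3 (fun i => sum3 (fun j => X i j * Y i j)).
Definition fnorm (X : Mat) : R := sqrt (inner X X).
Definition dev3 (X : Mat) : Mat := msub X (mscal (trace X / 3) mid).

Definition GLplus (A : Mat) : Prop := 0 < det A.
Definition SO3 (Q : Mat) : Prop := mmul (mtr Q) Q = mid /\ det Q = 1.

Definition frechet_at (W : Mat -> R) (DW : Mat -> Mat) (F : Mat) : Prop :=
  forall eps, 0 < eps -> exists delta, 0 < delta /\
    forall H, fnorm H < delta ->
      Rabs (W (madd F H) - W F - inner (DW F) H) <= eps * fnorm H.
Definition C1_GLplus (W : Mat -> R) (DW : Mat -> Mat) : Prop :=
  (forall F, GLplus F -> frechet_at W DW F) /\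
  (forall F, GLplus F -> forall eps, 0 < eps -> exists delta, 0 < delta /\
     forall G, fnorm (msub G F) < delta -> fnorm (msub (DW G) (DW F)) < eps).
Definition obj_iso (W : Mat -> R) : Prop :=
  forall Q R F, SO3 Q -> SO3 R -> GLplus F -> W (mmul (mmul Q F) R) = W F.

Definition Fe (F Fp : Mat) : Mat := mmul F (minv Fp).
Definition Cp (Fp : Mat) : Mat := mmul (mtr Fp) Fp.
Definition Be (Fe : Mat) : Mat := mmul Fe (mtr Fe).
Definition Sigma_e (DW : Mat -> Mat) (Fe : Mat) : Mat := mmul (mtr Fe) (DW Fe).
Definition tau_e (DW : Mat -> Mat) (Fe : Mat) : Mat := mmul (DW Fe) (mtr Fe).

Definition Nr (r : R) (S : Mat) (X : Mat) : Prop :=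
  (fnorm (dev3 S) < r /\ X = mzero) \/
  (fnorm (dev3 S) = r /\ exists lam, 0 <= lam /\
      X = mscal (lam / fnorm (dev3 S)) (dev3 S)).

Definition SM_rhs (r : R) (DW : Mat -> Mat) (F Fp : Mat) (Z : Mat) : Prop :=
  exists X, Nr r (tau_e DW (Fe F Fp)) X /\
    Z = mscal (-2) (mmul (mmul (minv F) (mmul X (Be (Fe F Fp)))) (mtr (minv F))).

Definition Lion_rhs (r : R) (DW : Mat -> Mat) (F Fp : Mat) (Z : Mat) : Prop :=
  exists Y, Nr r (Sigma_e DW (Fe F Fp)) Y /\
    Z = mscal (-1) (mmul (mmul (minv Fp) Y) (mtr (minv Fp))).

(* Isotropy makes W invariant along the rotation curves s |-> Q(s) F_e and
   F_e Q(s), so DW(F_e) is orthogonal to A F_e and F_e A for every skew A: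
   tau_e and Sigma_e are symmetric.  Then Sigma_e = F_e^{-1} tau_e F_e is a
   similarity of symmetric matrices, which preserves dev_3 and its norm, so
   N_r(Sigma_e) = F_e^{-1} N_r(tau_e) F_e.  Since F^{-1} = F_p^{-1} F_e^{-1},
   -2 F^{-1} X B_e F^{-T} = -F_p^{-1} (2 F_e^{-1} X F_e) F_p^{-T}, and the
   factor 2 is absorbed because N_r(S) is a cone. *)
From Stdlib Require Import Reals Lra Psatz FunctionalExtensionality.
Open Scope R_scope.

Ltac mext := let i := fresh "i" in let j := fresh "j" in
  apply functional_extensionality; intro i; apply functional_extensionality; intro j;
  destruct i, j.
Ltac munf := unfold dev3, trace, inner, mmul, mtr, madd, msub, mscal, mzero, mid, sum3 in *;
  simpl.

Definition msym (M : Mat) : Prop := mtr M = M.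
Definition mconj (G M : Mat) : Mat := mmul (mmul (minv G) M) G.

Lemma mmul_assoc A B C : mmul (mmul A B) C = mmul A (mmul B C).
Proof. mext; munf; ring. Qed.
Lemma mtr_mmul A B : mtr (mmul A B) = mmul (mtr B) (mtr A).
Proof. mext; munf; ring. Qed.
Lemma mtr_mtr A : mtr (mtr A) = A.
Proof. mext; munf; ring. Qed.
Lemma mmul_mid_l A : mmul mid A = A.
Proof. mext; munf; ring. Qed.
Lemma mmul_mid_r A : mmul A mid = A.
Proof. mext; munf; ring. Qed.
Lemma mmul_scal_l c A B : mmul (mscal c A) B = mscal c (mmul A B).
Proof. mext; munf; ring. Qed.
Lemma mmul_scal_r c A B : mmul A (mscal c B) = mscal c (mmul A B).
Proof. mext; munf; ring. Qed.
Lemma mmul_sub_l A B C : mmul (msub A B) C = msub (mmul A C) (mmul B C).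
Proof. mext; munf; ring. Qed.
Lemma mmul_sub_r A B C : mmul C (msub A B) = msub (mmul C A) (mmul C B).
Proof. mext; munf; ring. Qed.
Lemma mscal_mscal a b A : mscal a (mscal b A) = mscal (a * b) A.
Proof. mext; munf; ring. Qed.
Lemma mscal_zero c : mscal c mzero = mzero.
Proof. mext; munf; ring. Qed.
Lemma mscal_1 A : mscal 1 A = A.
Proof. mext; munf; ring. Qed.
Lemma mtr_dev3 A : mtr (dev3 A) = dev3 (mtr A).
Proof. mext; munf; ring. Qed.
Lemma trace_mmulC A B : trace (mmul A B) = trace (mmul B A).
Proof. unfold trace, mmul, sum3; ring. Qed.
Lemma inner_mtr A B : inner A B = trace (mmul A (mtr B)).
Proof. unfold trace, inner, mmul, mtr, sum3; ring. Qed.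
Lemma inner_ge0 M : 0 <= inner M M.
Proof. unfold inner, sum3; nra. Qed.

Lemma fnorm_scal c M : fnorm (mscal c M) = Rabs c * fnorm M.
Proof.
  unfold fnorm.
  replace (inner (mscal c M) (mscal c M)) with (c * c * inner M M) by (munf; ring).
  rewrite sqrt_mult_alt by nra. rewrite <- sqrt_Rsqr_abs. reflexivity.
Qed.

Lemma det_mmul A B : det (mmul A B) = det A * det B.
Proof. unfold det, cof, mmul, sum3; simpl; ring. Qed.
Lemma det_mid : det mid = 1.
Proof. unfold det, cof, mid, sum3; simpl; ring. Qed.

Lemma minv_l A : det A <> 0 -> mmul (minv A) A = mid.
Proof. intro H; mext; unfold mmul, minv, det, cof, sum3, mid in *; simpl in *; field; exact H. Qed.
Lemma minv_r A : det A <> 0 -> mmul A (minv A) = mid.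
Proof. intro H; mext; unfold mmul, minv, det, cof, sum3, mid in *; simpl in *; field; exact H. Qed.

Lemma det_minv A : det A <> 0 -> det (minv A) = / det A.
Proof.
  intro H. apply (Rmult_eq_reg_r (det A)); [|exact H].
  rewrite <- det_mmul, minv_l, det_mid by exact H. field; exact H.
Qed.

Lemma det_minv_neq0 A : det A <> 0 -> det (minv A) <> 0.
Proof. intro H; rewrite det_minv by exact H; apply Rinv_neq_0_compat, H. Qed.

Lemma minv_unique M A : det A <> 0 -> mmul M A = mid -> M = minv A.
Proof.
  intros H HM. rewrite <- (mmul_mid_r M), <- (minv_r A H), <- mmul_assoc, HM.
  apply mmul_mid_l.
Qed.

Lemma minvK A : det A <> 0 -> minv (minv A) = A.
Proof.
  intro H. symmetry. apply minv_unique; [apply det_minv_neq0, H | apply minv_r, H].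
Qed.

Lemma minv_mmul A B : det A <> 0 -> det B <> 0 -> minv (mmul A B) = mmul (minv B) (minv A).
Proof.
  intros HA HB. symmetry.
  apply minv_unique; [rewrite det_mmul; apply Rmult_integral_contrapositive; auto|].
  rewrite mmul_assoc, <- (mmul_assoc (minv A)), minv_l, mmul_mid_l by exact HA.
  apply minv_l, HB.
Qed.

Section Conjugation.

Variable G : Mat.
Hypothesis HG : det G <> 0.

Lemma mconj_zero : mconj G mzero = mzero.
Proof. mext; unfold mconj; munf; ring. Qed.

Lemma mconj_scal c M : mconj G (mscal c M) = mscal c (mconj G M).
Proof. unfold mconj; rewrite mmul_scal_r, !mmul_scal_l; reflexivity. Qed.

Lemma mconj_mmul M N : mmul (mconj G M) (mconj G N) = mconj G (mmul M N).
Proof.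
  unfold mconj. rewrite !mmul_assoc, <- (mmul_assoc G), minv_r, mmul_mid_l by exact HG.
  reflexivity.
Qed.

Lemma trace_mconj M : trace (mconj G M) = trace M.
Proof.
  unfold mconj. rewrite trace_mmulC, <- mmul_assoc, minv_r, mmul_mid_l by exact HG.
  reflexivity.
Qed.

Lemma mconjK M : mconj (minv G) (mconj G M) = M.
Proof.
  unfold mconj. rewrite minvK by exact HG.
  rewrite !mmul_assoc, minv_r, mmul_mid_r, <- mmul_assoc, minv_r, mmul_mid_l by exact HG.
  reflexivity.
Qed.

Lemma mconjVK M : mconj G (mconj (minv G) M) = M.
Proof.
  unfold mconj. rewrite minvK by exact HG.
  rewrite !mmul_assoc, minv_l, mmul_mid_r, <- mmul_assoc, minv_l, mmul_mid_l by exact HG.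
  reflexivity.
Qed.

Lemma dev3_mconj S : mconj G (dev3 S) = dev3 (mconj G S).
Proof.
  unfold dev3 at 1. unfold mconj at 1.
  rewrite mmul_sub_r, mmul_sub_l, mmul_scal_r, mmul_scal_l, mmul_mid_r, minv_l by exact HG.
  rewrite <- trace_mconj. reflexivity.
Qed.

Lemma fnorm_mconj_sym M : msym M -> msym (mconj G M) -> fnorm (mconj G M) = fnorm M.
Proof.
  intros HM HcM. unfold fnorm, msym in *.
  rewrite !inner_mtr, HM, HcM, mconj_mmul, trace_mconj. reflexivity.
Qed.

Lemma fnorm_dev3_mconj S : msym S -> msym (mconj G S) ->
  fnorm (dev3 (mconj G S)) = fnorm (dev3 S).
Proof.
  intros HS HcS. rewrite <- dev3_mconj. apply fnorm_mconj_sym; unfold msym.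
  - rewrite mtr_dev3, HS; reflexivity.
  - rewrite dev3_mconj, mtr_dev3, HcS; reflexivity.
Qed.

Lemma Nr_mconj r S X : msym S -> msym (mconj G S) -> Nr r S X -> Nr r (mconj G S) (mconj G X).
Proof.
  intros HS HcS. unfold Nr. rewrite (fnorm_dev3_mconj S HS HcS).
  intros [[Hn ->] | [Hn [lam [Hlam ->]]]].
  - left; split; [exact Hn | apply mconj_zero].
  - right; split; [exact Hn|].
    exists lam; split; [exact Hlam|]. rewrite mconj_scal, dev3_mconj. reflexivity.
Qed.

End Conjugation.
Lemma Nr_scal r c S X : 0 < c -> Nr r S X -> Nr r S (mscal c X).
Proof.
  intros Hc [[Hn ->] | [Hn [lam [Hlam ->]]]].
  - left; split; [exact Hn | apply mscal_zero].
  - right; split; [exact Hn|]. exists (c * lam); split; [nra|].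
    rewrite mscal_mscal. f_equal. unfold Rdiv; ring.
Qed.

(* The plane rotation about axis k with cos = (1-s^2)/(1+s^2) and
   sin = 2s/(1+s^2): a rational curve through mid with velocity skew k at s = 0. *)
Definition skew (k : I3) : Mat := fun p q =>
  mid p (nxt (nxt k)) * mid q (nxt k) - mid p (nxt k) * mid q (nxt (nxt k)).
Definition plane_proj (k : I3) : Mat := fun p q => mid p q - mid p k * mid q k.
Definition rot (k : I3) (s : R) : Mat :=
  madd mid (mscal (2 * s / (1 + s * s)) (msub (skew k) (mscal s (plane_proj k)))).

Lemma rot_SO3 k s : SO3 (rot k s).
Proof.
  assert (1 + s * s <> 0) by nra.
  unfold SO3, rot, skew, plane_proj, det, cof; split;
    [mext | ]; destruct k; munf; field; assumption.
Qed.

Lemma msym_of_inner_skew M : (forall k, inner M (skew k) = 0) -> msym M.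
Proof.
  intro H. pose proof (H i0). pose proof (H i1). pose proof (H i2).
  unfold msym, skew in *. munf. simpl in *. mext; lra.
Qed.

Lemma fnorm_sub_scal_bounded N P :
  exists B, forall s, 0 < s < 1 -> fnorm (msub N (mscal s P)) <= B.
Proof.
  set (a := inner N N). set (b := inner N P). set (p := inner P P).
  assert (Ha : 0 <= a) by apply inner_ge0.
  assert (Hp : 0 <= p) by apply inner_ge0.
  pose proof (Rle_abs b). pose proof (Rle_abs (- b)). rewrite Rabs_Ropp in *.
  exists (a + 2 * Rabs b + p + 1). intros s Hs. unfold fnorm.
  replace (inner (msub N (mscal s P)) (msub N (mscal s P))) with (a - 2 * s * b + s * s * p)
    by (unfold a, b, p; munf; ring).
  rewrite <- (sqrt_square (a + 2 * Rabs b + p + 1)) by lra. apply sqrt_le_1_alt.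
  assert (0 <= (1 - s * s) * p) by (apply Rmult_le_pos; nra).
  assert (0 <= s * (Rabs b + b)) by (apply Rmult_le_pos; lra).
  assert (0 <= (1 - s) * Rabs b) by (apply Rmult_le_pos; lra).
  nra.
Qed.

Lemma eq0_of_small_affine x y :
  (forall eps, 0 < eps -> exists s0, 0 < s0 /\ forall s, 0 < s < s0 -> Rabs (x - s * y) <= eps) ->
  x = 0.
Proof.
  intro H. destruct (Req_dec x 0) as [|Hx]; [assumption | exfalso].
  assert (Hxp : 0 < Rabs x) by (apply Rabs_pos_lt, Hx).
  destruct (H (Rabs x / 2)) as [s0 [Hs0 Hsmall]]; [lra|].
  pose proof (Rabs_pos y).
  set (s := Rmin (s0 / 2) (Rabs x / (4 * (Rabs y + 1)))).
  assert (Hss0 : s <= s0 / 2) by apply Rmin_l.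
  assert (Hsx : s * (4 * (Rabs y + 1)) <= Rabs x).
  { assert (Hsr : s <= Rabs x / (4 * (Rabs y + 1))) by apply Rmin_r.
    apply (Rmult_le_compat_r (4 * (Rabs y + 1))) in Hsr; [|lra].
    unfold Rdiv in Hsr. rewrite Rmult_assoc, Rinv_l in Hsr by lra. lra. }
  assert (Hs : 0 < s) by (apply Rmin_pos; [lra | apply Rdiv_lt_0_compat; lra]).
  specialize (Hsmall s ltac:(lra)).
  pose proof (Rabs_triang (x - s * y) (s * y)) as Htri.
  replace (x - s * y + s * y) with x in Htri by ring.
  rewrite Rabs_mult, (Rabs_pos_eq s) in Htri by lra. nra.
Qed.

Lemma frechet_small_on_curve W DW F (c : R -> R) (K : R -> Mat) B :
  frechet_at W DW F ->
  (forall s, 0 < s < 1 ->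
     0 < c s <= 2 * s /\ fnorm (K s) <= B /\ W (madd F (mscal (c s) (K s))) = W F) ->
  forall eps, 0 < eps ->
    exists s0, 0 < s0 /\ forall s, 0 < s < s0 -> Rabs (inner (DW F) (K s)) <= eps.
Proof.
  intros Hfr Hcurve eps Heps.
  pose proof (Rle_abs B). set (B' := Rabs B + 1).
  assert (HB' : 0 < B') by (unfold B'; pose proof (Rabs_pos B); lra).
  assert (HBB' : B < B') by (unfold B'; lra). clearbody B'.
  destruct (Hfr (eps / B')) as [delta [Hd Hfd]]; [apply Rdiv_lt_0_compat; lra|].
  exists (Rmin 1 (delta / (2 * B'))).
  split; [apply Rmin_pos; [lra | apply Rdiv_lt_0_compat; lra]|].
  intros s Hs.
  assert (Hs1 : s < 1) by (pose proof (Rmin_l 1 (delta / (2 * B'))); lra).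
  assert (Hsd : s * (2 * B') < delta).
  { assert (Hsr : s < delta / (2 * B')) by (pose proof (Rmin_r 1 (delta / (2 * B'))); lra).
    apply (Rmult_lt_compat_r (2 * B')) in Hsr; [|lra].
    unfold Rdiv in Hsr. rewrite Rmult_assoc, Rinv_l in Hsr by lra. lra. }
  destruct (Hcurve s ltac:(lra)) as [[Hc0 Hc1] [HK HW]].
  assert (HfK : fnorm (mscal (c s) (K s)) <= c s * B').
  { rewrite fnorm_scal, Rabs_pos_eq by lra. apply Rmult_le_compat_l; lra. }
  specialize (Hfd (mscal (c s) (K s)) ltac:(nra)).
  rewrite HW in Hfd.
  replace (inner (DW F) (mscal (c s) (K s))) with (c s * inner (DW F) (K s)) in Hfd
    by (munf; ring).
  replace (W F - W F - c s * inner (DW F) (K s)) with (- (c s * inner (DW F) (K s))) in Hfd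
    by ring.
  rewrite Rabs_Ropp, Rabs_mult, (Rabs_pos_eq (c s)) in Hfd by lra.
  assert (Heps' : eps / B' * fnorm (mscal (c s) (K s)) <= c s * eps).
  { apply Rle_trans with (eps / B' * (c s * B')).
    - apply Rmult_le_compat_l; [apply Rlt_le, Rdiv_lt_0_compat|]; lra.
    - right. field. lra. }
  nra.
Qed.

Lemma DW_orth_of_invariant_curve W DW F N P : frechet_at W DW F ->
  (forall s, 0 < s < 1 ->
     W (madd F (mscal (2 * s / (1 + s * s)) (msub N (mscal s P)))) = W F) ->
  inner (DW F) N = 0.
Proof.
  intros Hfr Hinv. destruct (fnorm_sub_scal_bounded N P) as [B HB].
  apply (eq0_of_small_affine _ (inner (DW F) P)). intros eps Heps.
  destruct (frechet_small_on_curve W DW F (fun s => 2 * s / (1 + s * s))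
              (fun s => msub N (mscal s P)) B Hfr) with (eps := eps)
    as [s0 [Hs0 Hsmall]]; [|exact Heps|].
  - intros s Hs. split; [|split; [apply HB, Hs | apply Hinv, Hs]].
    split; [apply Rdiv_lt_0_compat; nra|].
    apply (Rmult_le_reg_r (1 + s * s)); [nra|].
    unfold Rdiv. rewrite Rmult_assoc, Rinv_l by nra. nra.
  - exists s0. split; [exact Hs0|]. intros s Hs.
    replace (inner (DW F) N - s * inner (DW F) P) with (inner (DW F) (msub N (mscal s P)))
      by (munf; ring).
    apply Hsmall, Hs.
Qed.

Lemma SO3_mid : SO3 mid.
Proof. split; [mext; munf; ring | apply det_mid]. Qed.

Section Isotropy.

Variables (W : Mat -> R) (DW : Mat -> Mat) (G : Mat).
Hypotheses (Hfr : frechet_at W DW G) (Hiso : obj_iso W) (HG : GLplus G).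

Lemma DW_orth_skew_l k : inner (DW G) (mmul (skew k) G) = 0.
Proof.
  apply (DW_orth_of_invariant_curve W DW G _ (mmul (plane_proj k) G) Hfr). intros s Hs.
  transitivity (W (mmul (mmul (rot k s) G) mid)); [f_equal; mext; unfold rot; munf; ring|].
  apply Hiso; [apply rot_SO3 | apply SO3_mid | exact HG].
Qed.

Lemma DW_orth_skew_r k : inner (DW G) (mmul G (skew k)) = 0.
Proof.
  apply (DW_orth_of_invariant_curve W DW G _ (mmul G (plane_proj k)) Hfr). intros s Hs.
  transitivity (W (mmul (mmul mid G) (rot k s))); [f_equal; mext; unfold rot; munf; ring|].
  apply Hiso; [apply SO3_mid | apply rot_SO3 | exact HG].
Qed.

Lemma tau_sym : msym (mmul (DW G) (mtr G)).
Proof.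
  apply msym_of_inner_skew. intro k. rewrite <- (DW_orth_skew_l k). munf; ring.
Qed.

Lemma Sigma_sym : msym (mmul (mtr G) (DW G)).
Proof.
  apply msym_of_inner_skew. intro k. rewrite <- (DW_orth_skew_r k). munf; ring.
Qed.

End Isotropy.

Lemma mconj_tau_Sigma G D : det G <> 0 ->
  msym (mmul D (mtr G)) -> msym (mmul (mtr G) D) ->
  mconj G (mmul D (mtr G)) = mmul (mtr G) D.
Proof.
  unfold msym. intros HG Htau HSigma.
  rewrite <- Htau, mtr_mmul, mtr_mtr. unfold mconj.
  rewrite <- mmul_assoc, minv_l, mmul_mid_l by exact HG.
  rewrite <- HSigma, mtr_mmul, mtr_mtr. reflexivity.
Qed.

Lemma SM_rhs_factor P G X : det G <> 0 ->
  mscal (-2) (mmul (mmul (mmul P (minv G)) (mmul X (mmul G (mtr G)))) (mtr (mmul P (minv G)))) =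
  mscal (-1) (mmul (mmul P (mscal 2 (mconj G X))) (mtr P)).
Proof.
  intro HG.
  transitivity (mscal (-2)
    (mmul (mmul (mmul P (mconj G X)) (mtr (mmul (minv G) G))) (mtr P))).
  - unfold mconj. mext; munf; ring.
  - rewrite minv_l by exact HG. mext; unfold mconj; munf; ring.
Qed.

Lemma mmul_Fe_Fp F Fp : det Fp <> 0 -> mmul (Fe F Fp) Fp = F.
Proof. intro H. unfold Fe. rewrite mmul_assoc, minv_l, mmul_mid_r by exact H. reflexivity. Qed.

Lemma GLplus_Fe F Fp : GLplus F -> GLplus Fp -> GLplus (Fe F Fp).
Proof.
  unfold GLplus, Fe. intros HF HFp.
  rewrite det_mmul, det_minv by lra. apply Rmult_lt_0_compat, Rinv_0_lt_compat; assumption.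
Qed.

Lemma SM_rhs_iff_Lion_rhs W DW r : C1_GLplus W DW -> obj_iso W ->
  forall F Fp Z, GLplus F -> GLplus Fp -> SM_rhs r DW F Fp Z <-> Lion_rhs r DW F Fp Z.
Proof.
  intros [Hfr _] Hiso F Fp Z HF HFp.
  pose proof (GLplus_Fe F Fp HF HFp) as HGp.
  unfold GLplus in *. assert (hFp : det Fp <> 0) by lra.
  unfold SM_rhs, Lion_rhs, tau_e, Sigma_e, Be.
  pose proof (tau_sym W DW _ (Hfr _ HGp) Hiso HGp) as Htau.
  pose proof (Sigma_sym W DW _ (Hfr _ HGp) Hiso HGp) as HSigma.
  set (G := Fe F Fp) in *. assert (hG : det G <> 0) by lra.
  assert (HinvF : minv F = mmul (minv Fp) (minv G)).
  { rewrite <- (mmul_Fe_Fp F Fp hFp). apply minv_mmul; assumption. }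
  rewrite HinvF.
  pose proof (mconj_tau_Sigma G (DW G) hG Htau HSigma) as Hconj.
  split.
  - intros [X [HX ->]]. exists (mscal 2 (mconj G X)).
    split; [|apply SM_rhs_factor, hG].
    apply Nr_scal; [lra|]. rewrite <- Hconj.
    apply Nr_mconj; [exact hG | exact Htau | rewrite Hconj; exact HSigma | exact HX].
  - intros [Y [HY ->]]. exists (mconj (minv G) (mscal (/ 2) Y)). split.
    + rewrite <- (mconjK G hG (mmul (DW G) (mtr G))), Hconj.
      apply Nr_mconj; [apply det_minv_neq0, hG | exact HSigma | |].
      * rewrite <- Hconj, mconjK by exact hG. exact Htau.
      * apply Nr_scal; [lra | exact HY].
    + rewrite SM_rhs_factor, mconjVK, mscal_mscal by exact hG.
      replace (2 * / 2) with 1 by field. rewrite mscal_1. reflexivity.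
Qed.

Theorem mainTheorem6 (W : Mat -> R) (DW : Mat -> Mat)
  (HW : C1_GLplus W DW) (Hiso : obj_iso W) (r : R) (hr : 0 < r) :
  (forall F Fp : Mat, GLplus F -> GLplus Fp ->
     forall Z, SM_rhs r DW F Fp Z <-> Lion_rhs r DW F Fp Z) /\
  (forall (F : Mat) (Fpt : R -> Mat) (Cdot : R -> Mat) (a b : R),
     GLplus F ->
     (forall t, a < t < b -> GLplus (Fpt t)) ->
     (forall t, a < t < b -> forall i j,
        derivable_pt_lim (fun s => minv (Cp (Fpt s)) i j) t (Cdot t i j)) ->
     ((forall t, a < t < b -> SM_rhs r DW F (Fpt t) (Cdot t)) <->
      (forall t, a < t < b -> Lion_rhs r DW F (Fpt t) (Cdot t)))).
Proof.
  pose proof (SM_rhs_iff_Lion_rhs W DW r HW Hiso) as Hrhs.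
  split.
  - intros F Fp HF HFp Z. apply Hrhs; assumption.
  - intros F Fpt Cdot a b HF HFp _.
    split; intros H t Ht; apply Hrhs, H; auto.
Qed.
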